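(* Let $\mu$ be a Borel measure on $\mathbb{R}^n$ with $0<\mu(Q)<\infty$ for all $Q\in\mathcal{D}$. For any $f\in L^1_{\mathrm{loc}}(\mu)$ and any $Q\in\mathcal{D}$, $$\|\Delta_Qf\|_{L^1(\mu)}\le2\int_Q|f|\,d\mu.$$ Moreover, if $b\in\mathrm{BMO}(\mu)$, then for all $x$, $$\big|\mathbb{E}_Q(\Delta_Qb\,\Delta_Qf)(x)\big|\le2\,\|b\|_{\mathrm{BMO}}\,\langle|f|\rangle_Q.$$
   Context: $\mathcal{D}$ is the standard dyadic grid in $\mathbb{R}^n$; $\mathrm{ch}(Q)$ are the $2^n$ dyadic children of $Q$, $\widehat Q$ its parent; $\langle f\rangle_Q=\frac1{\mu(Q)}\int_Qf\,d\mu$, $\mathbb{E}_Qf=\langle f\rangle_Q\mathbf 1_Q$, $\Delta_Qf=\sum_{R\in\mathrm{ch}(Q)}\mathbb{E}_Rf-\mathbb{E}_Qf$. $\|b\|_{\mathrm{BMO}}=\sup_{Q\in\mathcal{D}}\frac1{\mu(Q)}\int_Q|b-\langle b\rangle_{\widehat Q}|\,d\mu$. *)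

From HB Require Import structures.
From mathcomp Require Import all_boot all_order all_algebra.
From mathcomp Require Import all_classical all_reals all_analysis.
Set Implicit Arguments.
Unset Strict Implicit.
Unset Printing Implicit Defensive.
Import Order.TTheory GRing.Theory Num.Theory.
Import numFieldNormedType.Exports.
Local Open Scope classical_set_scope.
Local Open Scope ring_scope.

(* R^n as row vectors 'rV[R]_n, equipped with its Borel sigma-algebra
   (sigma-algebra generated by the open sets of the usual topology). *)
Definition Rn (R : realType) (n : nat) := g_sigma_algebraType (@open 'rV[R]_n).

Definition dcube (R : realType) (n : nat) (k : int) (m : 'I_n -> int)
  : set (Rn R n) :=
  [set x : 'rV[R]_n | forall i : 'I_n,
      (m i)%:~R * (2%:R ^ (- k)) <= x ord0 i /\
      x ord0 i < (m i + 1)%:~R * (2%:R ^ (- k))].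

Definition dchild (R : realType) (n : nat) (k : int) (m : 'I_n -> int)
  (e : {ffun 'I_n -> bool}) : set (Rn R n) :=
  @dcube R n (k + 1) (fun i => 2 * m i + (e i)%:Z).

Definition dparent (R : realType) (n : nat) (k : int) (m : 'I_n -> int)
  : set (Rn R n) :=
  @dcube R n (k - 1) (fun i => (m i %/ 2)%Z).

Local Open Scope ereal_scope.

Definition avg (R : realType) (n : nat) (mu : {measure set (Rn R n) -> \bar R})
  (Q : set (Rn R n)) (f : Rn R n -> R) : R :=
  (fine (\int[mu]_(x in Q) (f x)%:E) / fine (mu Q))%R.

Definition condE (R : realType) (n : nat) (mu : {measure set (Rn R n) -> \bar R})
  (Q : set (Rn R n)) (f : Rn R n -> R) : Rn R n -> R :=
  fun x => (avg mu Q f * \1_Q x)%R.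

Definition martdiff (R : realType) (n : nat) (mu : {measure set (Rn R n) -> \bar R})
  (k : int) (m : 'I_n -> int) (f : Rn R n -> R) : Rn R n -> R :=
  fun x => (\sum_(e : {ffun 'I_n -> bool}) condE mu (@dchild R n k m e) f x
            - condE mu (@dcube R n k m) f x)%R.

Definition loc_integrable (R : realType) (n : nat)
  (mu : {measure set (Rn R n) -> \bar R}) (f : Rn R n -> R) : Prop :=
  measurable_fun setT f /\
  forall K : set 'rV[R]_n, compact K ->
    \int[mu]_(x in (K : set (Rn R n))) `|f x|%:E < +oo.

Definition bmo_norm (R : realType) (n : nat)
  (mu : {measure set (Rn R n) -> \bar R}) (b : Rn R n -> R) : \bar R :=
  ereal_sup [set ((fine (mu (@dcube R n k m)))^-1)%:E *
                 \int[mu]_(x in @dcube R n k m)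
                    `|b x - avg mu (@dparent R n k m) b|%:E
            | k in [set: int] & m in [set: 'I_n -> int]].

From HB Require Import structures.
From mathcomp Require Import all_boot all_order all_algebra.
From mathcomp Require Import all_classical all_reals all_analysis.
From mathcomp Require Import lra measurable_realfun.
Import Order.TTheory GRing.Theory Num.Theory.
Import numFieldNormedType.Exports.
Local Open Scope classical_set_scope.
Local Open Scope ring_scope.
Set Implicit Arguments.
Unset Strict Implicit.

(* On a child P of the dyadic cube Q, Delta_Q f is the constant <f>_P - <f>_Q,
   and it vanishes off Q.  Hence
     int |Delta_Q f| = sum_P |<f>_P - <f>_Q| mu(P)
                    <= sum_P int_P |f| + |<f>_Q| mu(Q) <= 2 int_Q |f|.
   Likewise E_Q (Delta_Q b Delta_Q f) is the constant
   mu(Q)^-1 sum_P (<b>_P - <b>_Q) (<f>_P - <f>_Q) mu(P), and since Q is the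
   parent of P, |<b>_P - <b>_Q| <= <|b - <b>_Q|>_P <= ||b||_BMO, so the first
   estimate applies again.  Only the last step uses the dyadic structure: the
   rest holds for any finite measurable partition of a set of finite positive
   measure. *)

Lemma bigsetU_index_enum (T : Type) (I : finType) (F : I -> set T) :
  \big[setU/set0]_(i : I) F i = \bigcup_i F i.
Proof.
rewrite -bigcup_seq; apply: eq_bigcupl; split=> i //= _.
by rewrite mem_index_enum.
Qed.

Section averages.
Context (R : realType) (n : nat) (mu : {measure set (Rn R n) -> \bar R}).
Implicit Types (A : set (Rn R n)) (f : Rn R n -> R).
Local Notation mass A := (fine (mu A)).

Lemma measure_fineK A : (0 < mu A < +oo)%E -> mu A = (mass A)%:E.
Proof. by move=> /andP[mu0 muoo]; rewrite fineK // ge0_fin_numE // ltW. Qed.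

Lemma integrable_cst A (c : R) : measurable A -> (mu A < +oo)%E ->
  mu.-integrable A (EFin \o cst c).
Proof.
move=> mA muoo; apply/integrableP; split; first exact/measurable_EFinP.
by rewrite (eq_integral (cst `|c|%:E)) // integral_cst // lte_mul_pinfty.
Qed.

Lemma integrableB_cst A f (c : R) : measurable A -> (mu A < +oo)%E ->
  mu.-integrable A (EFin \o f) -> mu.-integrable A (EFin \o (fun x => f x - c)).
Proof.
move=> mA muoo intf; have intc := integrable_cst c mA muoo.
by apply: eq_integrable (integrableB mA intf intc) => // x _; rewrite /= EFinB.
Qed.

Lemma avgK A f : mass A != 0 -> avg mu A f * mass A = \int[mu]_(x in A) f x.
Proof. by move=> mass0; rewrite /avg divfK. Qed.

Lemma normr_avgB_le A f (c : R) : measurable A -> (0 < mu A < +oo)%E ->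
  mu.-integrable A (EFin \o f) ->
  `|avg mu A f - c| <= avg mu A (fun x => `|f x - c|).
Proof.
move=> mA muA intf; have mass0 := fine_gt0 muA.
rewrite -(ler_pM2r mass0) avgK ?gt_eqF // -{1}(gtr0_norm mass0).
have muoo := (andP muA).2.
rewrite -normrM mulrBl avgK ?gt_eqF // -Rintegral_cst // -RintegralB //.
- exact/le_normr_Rintegral/integrableB_cst.
- exact: integrable_cst.
Qed.
End averages.

Section partition.
Context (R : realType) (n : nat) (mu : {measure set (Rn R n) -> \bar R}).
Context (I : finType) (Q : set (Rn R n)) (P : I -> set (Rn R n)).
Hypothesis mP : forall i, measurable (P i).
Hypothesis QE : Q = \bigcup_i P i.
Hypothesis tP : trivIset setT P.
Hypothesis muP : forall i, (0 < mu (P i) < +oo)%E.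
Hypothesis muQ : (0 < mu Q < +oo)%E.
Implicit Types (f h : Rn R n -> R).
Local Notation mass A := (fine (mu A)).
Local Notation jump f i := (avg mu (P i) f - avg mu Q f).

Definition partition_diff f (x : Rn R n) : R :=
  \sum_(i : I) condE mu (P i) f x - condE mu Q f x.

Let bigsetUE : \big[setU/set0]_(i : I) P i = Q.
Proof. by rewrite bigsetU_index_enum QE. Qed.

Let measurableQ : measurable Q.
Proof. by rewrite -bigsetUE; exact: bigsetU_measurable. Qed.

Let partition_sub i : P i `<=` Q.
Proof. by rewrite QE => x Pix; exists i. Qed.

Lemma partition_diffE f i x : P i x -> partition_diff f x = jump f i.
Proof.
move=> Pix; rewrite /partition_diff /condE (bigD1 i) //= big1 => [|j ji].
  by rewrite !indicE !mem_set ?mulr1 ?addr0 //; exact: partition_sub Pix.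
rewrite indicE memNset ?mulr0 // => Pjx.
by move/eqP: ji; apply; apply: tP => //; exists x.
Qed.

Lemma partition_diff_out f x : ~ Q x -> partition_diff f x = 0.
Proof.
move=> Qx; rewrite /partition_diff /condE big1 => [|i _].
  by rewrite indicE memNset // mulr0 subr0.
by rewrite indicE memNset ?mulr0 // => /partition_sub.
Qed.

Lemma measurable_partition_diff f : measurable_fun setT (partition_diff f).
Proof.
apply: measurable_funB.
  by apply: measurable_sum => i; apply: measurable_funM => //; exact: measurable_indic.
by apply: measurable_funM => //; exact: measurable_indic measurableQ.
Qed.

Lemma integral_partition_step h (w : I -> R) : measurable_fun Q h ->
  (forall i x, P i x -> h x = w i) ->
  (\int[mu]_(x in Q) (h x)%:E = (\sum_i w i * mass (P i))%:E)%E.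
Proof.
move=> mh hP; rewrite -bigsetUE integral_bigsetU_EFin //; first last.
- by rewrite bigsetUE; exact/measurable_EFinP.
- exact: sub_trivIset tP.
- exact: index_enum_uniq.
rewrite -sumEFin; apply: eq_bigr => i _.
rewrite (eq_integral (cst (w i)%:E)) => [|x /set_mem Pix]; last by rewrite /= (hP i).
by rewrite integral_cst // (measure_fineK (muP i)).
Qed.

Lemma sum_mass_partition : \sum_i mass (P i) = mass Q.
Proof.
have intQ : (\int[mu]_(x in Q) 1%:E = mu Q :> \bar R)%E.
  by rewrite integral_cst ?mul1e //; exact: measurableQ.
apply: EFin_inj; rewrite -(measure_fineK muQ) -intQ.
rewrite (@integral_partition_step (cst 1) (cst 1)) //.
by congr EFin; apply: eq_bigr => i _; rewrite mul1r.
Qed.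

Lemma Rintegral_partition f : mu.-integrable Q (EFin \o f) ->
  \int[mu]_(x in Q) f x = \sum_i \int[mu]_(x in P i) f x.
Proof.
move=> intf; apply: EFin_inj; rewrite -sumEFin.
rewrite fineK ?(integrable_fin_num measurableQ intf) //.
rewrite -bigsetUE integral_bigsetU_EFin //; first last.
- by rewrite bigsetUE; case/integrableP: intf.
- exact: sub_trivIset tP.
- exact: index_enum_uniq.
apply: eq_bigr => i _; rewrite fineK //; apply: integrable_fin_num => //.
exact: integrableS measurableQ _ (@partition_sub i) intf.
Qed.

Lemma sum_normr_avgB_le f : mu.-integrable Q (EFin \o f) ->
  \sum_i `|jump f i| * mass (P i) <= 2 * \int[mu]_(x in Q) `|f x|.
Proof.
move=> intf.
have intP i : mu.-integrable (P i) (EFin \o f).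
  exact: integrableS measurableQ _ (@partition_sub i) intf.
have term i : `|jump f i| * mass (P i) <=
    \int[mu]_(x in P i) `|f x| + `|avg mu Q f| * mass (P i).
  have massP := fine_gt0 (muP i).
  rewrite -{1}(gtr0_norm massP) -normrM mulrBl avgK ?gt_eqF //.
  apply: le_trans (ler_normB _ _) _; rewrite normrM (gtr0_norm massP).
  by rewrite lerD2r le_normr_Rintegral.
apply: le_trans (ler_sum _ (fun i _ => term i)) _.
rewrite big_split /= -mulr_sumr sum_mass_partition -Rintegral_partition; last first.
  exact: integrable_norm.
have massQ := fine_gt0 muQ.
have : `|avg mu Q f| * mass Q <= \int[mu]_(x in Q) `|f x|.
  rewrite -{1}(gtr0_norm massQ) -normrM avgK ?gt_eqF //.
  exact: le_normr_Rintegral measurableQ intf.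
lra.
Qed.

Lemma integral_abs_partition_diff f :
  (\int[mu]_x `|partition_diff f x|%:E =
    (\sum_i `|jump f i| * mass (P i))%:E)%E.
Proof.
rewrite -(@integral_partition_step (fun x => `|partition_diff f x|)); first last.
- by move=> i x Pix; rewrite (partition_diffE f Pix).
- by apply: measurableT_comp => //; exact: measurable_funS (measurable_partition_diff f).
rewrite [RHS]integral_mkcond; apply: eq_integral => x _; rewrite patchE.
by case: ifPn => // /negP Qx; rewrite partition_diff_out ?normr0 // => /mem_set.
Qed.

Lemma integral_abs_partition_diff_le f : mu.-integrable Q (EFin \o f) ->
  (\int[mu]_x `|partition_diff f x|%:E <=
    2%:E * \int[mu]_(x in Q) `|f x|%:E)%E.
Proof.
move=> intf; rewrite integral_abs_partition_diff.
rewrite -[(\int[mu]_(x in Q) _)%E]fineK -?EFinM ?lee_fin ?sum_normr_avgB_le //.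
exact: (integrable_fin_num measurableQ (integrable_norm intf)).
Qed.

Lemma condE_partition_diffM_le b f (B : R) (x : Rn R n) :
  mu.-integrable Q (EFin \o b) -> mu.-integrable Q (EFin \o f) ->
  (forall i, avg mu (P i) (fun y => `|b y - avg mu Q b|) <= B) ->
  `|condE mu Q (fun y => partition_diff b y * partition_diff f y) x| <=
    2 * B * avg mu Q (fun y => `|f y|).
Proof.
move=> intb intf oscB.
have jumpB i : `|jump b i| <= B.
  apply: le_trans (oscB i); apply: normr_avgB_le => //.
  exact: integrableS measurableQ _ (@partition_sub i) intb.
have [z [i _ _]] : \bigcup_i P i !=set0.
  by rewrite -QE; apply/set0P/negP => /eqP Q0; move: muQ; rewrite Q0 measure0 ltxx.
have B0 : 0 <= B := le_trans (normr_ge0 _) (jumpB i).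
set h := fun y => partition_diff b y * partition_diff f y.
have intQh : \int[mu]_(y in Q) h y = \sum_i jump b i * jump f i * mass (P i).
  rewrite /Rintegral (@integral_partition_step h (fun i => jump b i * jump f i)) //=.
  - apply: measurable_funS (measurable_funM (measurable_partition_diff b)
      (measurable_partition_diff f)) => //; exact: measurableQ.
  - by move=> j y Pjy; rewrite /h (partition_diffE b Pjy) (partition_diffE f Pjy).
have intQh_le : `|\int[mu]_(y in Q) h y| <= 2 * B * \int[mu]_(y in Q) `|f y|.
  rewrite intQh; apply: le_trans (ler_norm_sum _ _ _) _.
  rewrite [2 * B]mulrC -mulrA; apply: le_trans (ler_wpM2l B0 (sum_normr_avgB_le intf)).
  rewrite mulr_sumr; apply: ler_sum => j _.
  rewrite !normrM (ger0_norm (fine_ge0 (measure_ge0 _ _))) mulrA.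
  by apply: ler_wpM2r; [exact: fine_ge0 | exact: ler_wpM2r].
have massQ := fine_gt0 muQ.
rewrite /condE normrM /avg normrM normfV (gtr0_norm massQ).
apply: (@le_trans _ _ (`|\int[mu]_(y in Q) h y| / mass Q)).
  rewrite -[leRHS]mulr1 ler_wpM2l ?divr_ge0 //.
  by rewrite indicE; case: (_ \in _); rewrite ?normr1 ?normr0.
by rewrite mulrA ler_pM2r ?invr_gt0.
Qed.
End partition.

Lemma dyadic_halvesP (R : realFieldType) (c h x : R) (b : bool) : 0 < h ->
  ((2 * c + b%:R) * h <= x /\ x < (2 * c + b%:R + 1) * h) <->
  ((c * (2 * h) <= x /\ x < (c + 1) * (2 * h)) /\ b = ((2 * c + 1) * h <= x)).
Proof.
move=> h0; case: b => /=; split.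
- by move=> [x1 x2]; do ![split]; [nra | nra | apply/esym/idP; nra].
- by move=> [[x1 x2] /esym/idP x3]; split; nra.
- move=> [x1 x2]; do ![split]; [nra | nra | apply/esym/negbTE; rewrite -ltNge; nra].
- by move=> [[x1 x2] /esym/negbT]; rewrite -ltNge => x3; split; nra.
Qed.

Lemma exprz_half (R : numFieldType) (k : int) :
  (2%:R : R) ^ (- k) = 2 * 2%:R ^ (- (k + 1)).
Proof.
by rewrite opprD expfzDr ?pnatr_eq0 // exprN1 mulrCA divff ?mulr1 ?pnatr_eq0.
Qed.

Section dyadic_cubes.
Context (R : realType) (n : nat).
Implicit Types (k : int) (m : 'I_n -> int) (e : {ffun 'I_n -> bool}).

Definition dchild_index k m (x : Rn R n) : {ffun 'I_n -> bool} :=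
  [ffun i => (2 * (m i)%:~R + 1) * 2%:R ^ (- (k + 1)) <= x ord0 i].

Lemma dchildP k m e x :
  dchild k m e x <-> dcube k m x /\ e = dchild_index k m x.
Proof.
have h0 : 0 < (2%:R : R) ^ (- (k + 1)) by rewrite exprz_gt0.
have dchildE : dchild k m e x <-> forall i,
  ((2 * (m i)%:~R + (e i)%:R) * 2%:R ^ (- (k + 1)) <= x ord0 i /\
   x ord0 i < (2 * (m i)%:~R + (e i)%:R + 1) * 2%:R ^ (- (k + 1))).
  by rewrite /dchild /dcube; split=> xe j; have := xe j; rewrite !intrD intrM.
rewrite dchildE /dcube /= (exprz_half R k); split.
- move=> xe; split=> [i|].
    by have /dyadic_halvesP[//|+ _] := xe i; rewrite intrD.
  apply/ffunP => i; rewrite ffunE.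
  by have /dyadic_halvesP[//|_] := xe i.
- move=> [xQ ->] i; rewrite ffunE; apply/dyadic_halvesP => //.
  by split=> //; have := xQ i; rewrite intrD.
Qed.

Lemma dchild_sub k m e : @dchild R n k m e `<=` @dcube R n k m.
Proof. by move=> x /dchildP[]. Qed.

Lemma dcube_bigcup k m : @dcube R n k m = \bigcup_e @dchild R n k m e.
Proof.
apply/seteqP; split=> [x xQ | x [e _ /dchild_sub //]].
by exists (dchild_index k m x) => //; apply/dchildP.
Qed.

Lemma trivIset_dchild k m : trivIset setT (@dchild R n k m).
Proof. by move=> e e' _ _ [x [/dchildP[_ ->] /dchildP[_ ->]]]. Qed.

Lemma dparent_dchild k m e :
  @dparent R n (k + 1) (fun i => 2 * m i + (e i)%:Z) = @dcube R n k m.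
Proof.
rewrite /dparent addrK; congr dcube; apply: funext => i.
by rewrite mulrC divzMDl //; case: (e i); rewrite addr0.
Qed.
End dyadic_cubes.

Section borel_Rn.
Context (R : realType) (n : nat).

Lemma open_measurable_Rn (A : set 'rV[R]_n) :
  open A -> measurable (A : set (Rn R n)).
Proof. exact: sub_sigma_algebra. Qed.

Lemma closed_measurable_Rn (A : set 'rV[R]_n) :
  closed A -> measurable (A : set (Rn R n)).
Proof.
move=> cA; rewrite -[A]setCK; apply: measurableC.
by apply: open_measurable_Rn; exact: closed_openC.
Qed.

Lemma measurable_dcube (k : int) (m : 'I_n -> int) : measurable (@dcube R n k m).
Proof.
pose lo i := (m i)%:~R * 2%:R ^ (- k) : R.
pose hi i := (m i + 1)%:~R * 2%:R ^ (- k) : R.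
have -> : @dcube R n k m = \bigcap_(i in setT)
    ([set x : Rn R n | lo i <= x ord0 i] `&` [set x | x ord0 i < hi i]).
  by apply/seteqP; split=> [x xQ i _|x xQ i]; [exact: xQ | exact: xQ].
apply: fin_bigcap_measurable; first exact: (@finite_finset (ordinal n)).
move=> i _; apply: measurableI.
- apply: closed_measurable_Rn.
  apply: (@preimage_closed _ _ (fun x : 'rV[R]_n => x ord0 i) [set y | lo i <= y]).
    by move=> x _; exact: coord_continuous.
  exact: closed_ge.
- apply: open_measurable_Rn.
  apply: (@open_comp _ _ (fun x : 'rV[R]_n => x ord0 i) [set y | y < hi i]).
    by move=> x _; exact: coord_continuous.
  exact: open_lt.
Qed.

Lemma integrable_dcube (mu : {measure set (Rn R n) -> \bar R}) f k m :
  loc_integrable mu f -> mu.-integrable (@dcube R n k m) (EFin \o f).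
Proof.
move=> [mf intK].
pose lo i := (m i)%:~R * 2%:R ^ (- k) : R.
pose hi i := (m i + 1)%:~R * 2%:R ^ (- k) : R.
pose K := [set v : 'rV[R]_n | forall i, `[lo i, hi i]%classic (v ord0 i)].
have cK : compact K.
  by apply: (@rV_compact _ _ (fun i => `[lo i, hi i]%classic)) => i; exact: segment_compact.
have mK : measurable (K : set (Rn R n)).
  by apply: closed_measurable_Rn; apply: compact_closed cK; exact: norm_hausdorff.
apply/integrableP; split.
  by apply/measurable_EFinP; apply: measurable_funS mf => //; exact: measurable_dcube.
apply: le_lt_trans (intK K cK); apply: ge0_subset_integral => //.
- exact: measurable_dcube.
- by apply/measurable_EFinP/measurableT_comp => //; exact: measurable_funS mf.
- by move=> x xQ i; have [lox /ltW xhi] := xQ i; rewrite /= in_itv /= lox xhi.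
Qed.
End borel_Rn.

Section dyadic_martingale.
Context (R : realType) (n : nat) (mu : {measure set (Rn R n) -> \bar R}).
Hypothesis mu_dcube : forall k m, (0 < mu (@dcube R n k m) < +oo)%E.
Implicit Types (b f : Rn R n -> R) (k : int) (m : 'I_n -> int).

Lemma avg_osc_dchild_le_bmo b k m e : loc_integrable mu b ->
  ((avg mu (@dchild R n k m e) (fun y => `|b y - avg mu (@dcube R n k m) b|))%:E
    <= bmo_norm mu b)%E.
Proof.
move=> locb; set c := avg mu _ b; set P := dchild k m e.
have intP : mu.-integrable P (EFin \o (fun y => `|b y - c|)).
  apply/integrable_norm/integrableB_cst; first exact: measurable_dcube.
    by have /andP[] := mu_dcube (k + 1) (fun i => 2 * m i + (e i)%:Z).
  exact: integrable_dcube.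
apply: ereal_sup_ubound; exists (k + 1) => //; exists (fun i => 2 * m i + (e i)%:Z) => //.
rewrite dparent_dchild -/c /avg [in RHS]mulrC EFinM fineK //.
exact: (integrable_fin_num (measurable_dcube _ _) intP).
Qed.

Let dchild_partition k m :
  [/\ forall e, measurable (@dchild R n k m e),
      @dcube R n k m = \bigcup_e @dchild R n k m e,
      trivIset setT (@dchild R n k m),
      forall e, (0 < mu (@dchild R n k m e) < +oo)%E &
      (0 < mu (@dcube R n k m) < +oo)%E].
Proof.
split=> [e|||e|//].
- exact: measurable_dcube.
- exact: dcube_bigcup.
- exact: trivIset_dchild.
- exact: mu_dcube.
Qed.

Lemma integral_abs_martdiff_le f k m : loc_integrable mu f ->
  (\int[mu]_x `|martdiff mu k m f x|%:E
    <= 2%:E * \int[mu]_(x in @dcube R n k m) `|f x|%:E)%E.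
Proof.
move=> locf; have [mP QE tP muP muQ] := dchild_partition k m.
apply: (integral_abs_partition_diff_le mP QE tP muP muQ); exact: integrable_dcube.
Qed.

Lemma condE_martdiffM_le b f k m (x : Rn R n) :
  loc_integrable mu b -> (bmo_norm mu b < +oo)%E -> loc_integrable mu f ->
  (`|condE mu (@dcube R n k m)
       (fun y => martdiff mu k m b y * martdiff mu k m f y) x|%:E
    <= 2%:E * bmo_norm mu b * (avg mu (@dcube R n k m) (fun y => `|f y|))%:E)%E.
Proof.
move=> locb bmo_oo locf; have [mP QE tP muP muQ] := dchild_partition k m.
have bmo_fin : bmo_norm mu b \is a fin_num.
  rewrite fin_numElt bmo_oo andbT.
  exact: lt_le_trans (ltNyr _) (@avg_osc_dchild_le_bmo b k m [ffun=> false] locb).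
rewrite -(fineK bmo_fin) -!EFinM lee_fin.
apply: (condE_partition_diffM_le mP QE tP muP muQ);
  [exact: integrable_dcube | exact: integrable_dcube |].
by move=> e; rewrite -lee_fin fineK //; exact: avg_osc_dchild_le_bmo.
Qed.
End dyadic_martingale.

Local Open Scope ereal_scope.

Theorem mainTheorem7 (R : realType) (n : nat) (n_gt0 : (0 < n)%N)
  (mu : {measure set (Rn R n) -> \bar R})
  (hmu : forall (k : int) (m : 'I_n -> int),
      0 < mu (@dcube R n k m) /\ mu (@dcube R n k m) < +oo)
  (f : Rn R n -> R) (hf : loc_integrable mu f) :
  (forall (k : int) (m : 'I_n -> int),
      \int[mu]_x `|martdiff mu k m f x|%:E
        <= 2%:E * \int[mu]_(x in @dcube R n k m) `|f x|%:E)
  /\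
  (forall b : Rn R n -> R, loc_integrable mu b -> bmo_norm mu b < +oo ->
    forall (k : int) (m : 'I_n -> int) (x : Rn R n),
      `|condE mu (@dcube R n k m)
           (fun y => martdiff mu k m b y * martdiff mu k m f y)%R x|%:E
        <= 2%:E * bmo_norm mu b
           * (avg mu (@dcube R n k m) (fun y => `|f y|%R))%:E).
Proof.
have mu_dcube k m : 0 < mu (@dcube R n k m) < +oo by apply/andP; exact: hmu.
split=> [k m | b locb bmo_oo k m x].
- exact: integral_abs_martdiff_le.
- exact: condE_martdiffM_le.
Qed.
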